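(* For every integer $n\ge1$ there are real constants $c_{kj}$, $1\le k\le n$, $1\le j\le n+1$, such that for every $w,w_0\in\mathbb{C}$ the following identity holds: $$\langle w^n(w-w_0)\rangle=\langle w_0w^n\rangle+\langle w_0^n(w-w_0)\rangle+\sum_{k=1}^n\sum_{j=1}^{n+1}c_{kj}\langle w_0\rangle^{n+1-j}\int_0^1\langle w-w_0t\rangle^j(1-t)^{k-1}\,dt.$$
   Context: For $w\in\mathbb{C}\setminus\{0\}$, $\langle w\rangle:=\overline w/w$ denotes the phase function; the identity is understood for $w,w_0$ such that the phase functions involved are defined (in particular $w_0\ne0$, $w\ne0$, $w\ne w_0$). *)

From HB Require Import structures.
From mathcomp Require Import all_boot all_order all_algebra.
From mathcomp Require Import all_classical all_reals all_analysis.
From mathcomp Require Import complex.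
Set Implicit Arguments. Unset Strict Implicit. Unset Printing Implicit Defensive.
Import Order.TTheory GRing.Theory Num.Theory.
Local Open Scope ring_scope.
Local Open Scope complex_scope.

(* phase function <w> := conj(w)/w  (only used for w <> 0 in the statement;
   mathcomp's total inverse gives <0> = 0, irrelevant on a null set). *)
Definition phase (R : rcfType) (w : R[i]) : R[i] := (w^* / w)%R.

Definition cint01 (R : realType) (f : R -> R[i]) : R[i] :=
  ((Rintegral lebesgue_measure `[0%R, 1%R] (fun t => complex.Re (f t)))
   +i* (Rintegral lebesgue_measure `[0%R, 1%R] (fun t => complex.Im (f t))))%C.

From HB Require Import structures.
From mathcomp Require Import all_boot all_order all_algebra.
From mathcomp Require Import all_classical all_reals all_analysis.
From mathcomp Require Import complex.
From mathcomp Require Import ring zify.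
From mathcomp Require Import measurable_realfun.
Import Order.TTheory GRing.Theory Num.Theory.
Import numFieldNormedType.Exports.
Local Open Scope ring_scope.
Local Open Scope complex_scope.
Set Implicit Arguments.
Unset Strict Implicit.

(** Write [a = <w>], [b = <w0>] and [u = <w - w0>].  Since the phase is
    multiplicative, the double sum has to equal [(u - b)(a^n - b^n) - b^(n+1)].
    Away from the collinear case, [q t := <w - w0 t> - b] equals [c / (w - w0 t)]
    for a constant [c], so [m t := q t (1 - t)] satisfies [m' = - q^2 / q 1];
    integrating [(m^k)'] gives [k * int_0^1 q^(k+1) (1 - t)^(k-1) = q 1 * (q 0)^k
    = (u - b)(a - b)^k].  Expanding [q^(k+1)] binomially and summing over [k]
    with weights [C(n, k) b^(n-k)] yields the identity.  If [w] and [w0] are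
    real multiples of each other, [q] vanishes except at one point, as does
    [u - b = q 1], and the integral identity reads [0 = 0]. *)

Section ComplexComponents.
Variable R : rcfType.

Lemma ReD (x y : R[i]) : complex.Re (x + y) = complex.Re x + complex.Re y.
Proof. by case: x y => [? ?] [? ?]. Qed.

Lemma ImD (x y : R[i]) : complex.Im (x + y) = complex.Im x + complex.Im y.
Proof. by case: x y => [? ?] [? ?]. Qed.

Lemma ReM (x y : R[i]) :
  complex.Re (x * y) = complex.Re x * complex.Re y - complex.Im x * complex.Im y.
Proof. by case: x y => [? ?] [? ?]. Qed.

Lemma ImM (x y : R[i]) :
  complex.Im (x * y) = complex.Re x * complex.Im y + complex.Im x * complex.Re y.
Proof. by case: x y => [? ?] [? ?]. Qed.

Lemma ReV (x : R[i]) :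
  complex.Re x^-1 = complex.Re x * (complex.Re x ^+ 2 + complex.Im x ^+ 2)^-1.
Proof. by case: x. Qed.

Lemma ImV (x : R[i]) :
  complex.Im x^-1 = - complex.Im x * (complex.Re x ^+ 2 + complex.Im x ^+ 2)^-1.
Proof. by case: x => a b /=; rewrite mulNr. Qed.

Lemma normc2_neq0 (z : R[i]) :
  z != 0 -> complex.Re z ^+ 2 + complex.Im z ^+ 2 != 0.
Proof.
case: z => a b /= z0; rewrite paddr_eq0 ?sqr_ge0 // !sqrf_eq0.
by apply: contra z0 => /andP[/eqP-> /eqP->].
Qed.

End ComplexComponents.

Lemma is_derive_inv (R : numFieldType) (h : R -> R) (x dh : R) :
  h x != 0 -> is_derive x 1 h dh ->
  is_derive x 1 (fun t => (h t)^-1) (- (h x) ^- 2 * dh).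
Proof.
move=> hx0 dhx; apply: DeriveDef; first exact: derivableV.
by rewrite deriveV // derive_val.
Qed.

Section ComplexValuedCalculus.
Variable R : realType.
Implicit Types (f g : R -> R[i]) (c : R[i]).

Definition is_cderive f f' := forall x : R,
  is_derive x 1 (fun t => complex.Re (f t)) (complex.Re (f' x)) /\
  is_derive x 1 (fun t => complex.Im (f t)) (complex.Im (f' x)).

Definition cderivable f := exists f', is_cderive f f'.

Lemma is_cderive_ext f f' g g' :
  is_cderive f f' -> f =1 g -> f' =1 g' -> is_cderive g g'.
Proof. by move=> df /funext <- /funext <-. Qed.

Lemma is_cderive_cst c : is_cderive (fun=> c) (fun=> 0).
Proof. by move=> x; split; exact: is_derive_cst. Qed.

Lemma is_cderive_real : is_cderive (fun t => t%:C) (fun=> 1).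
Proof. by move=> x; split; [exact: is_derive_id | exact: is_derive_cst]. Qed.

Lemma is_cderiveD f f' g g' : is_cderive f f' -> is_cderive g g' ->
  is_cderive (fun t => f t + g t) (fun t => f' t + g' t).
Proof.
move=> df dg x; have [df1 df2] := df x; have [dg1 dg2] := dg x; split.
- have -> : (fun t => complex.Re (f t + g t)) =
      (fun t => complex.Re (f t)) + (fun t => complex.Re (g t)).
    by apply/funext => t; rewrite ReD.
  by rewrite ReD; exact: is_deriveD.
- have -> : (fun t => complex.Im (f t + g t)) =
      (fun t => complex.Im (f t)) + (fun t => complex.Im (g t)).
    by apply/funext => t; rewrite ImD.
  by rewrite ImD; exact: is_deriveD.
Qed.

Lemma is_cderiveM f f' g g' : is_cderive f f' -> is_cderive g g' ->
  is_cderive (fun t => f t * g t) (fun t => f' t * g t + f t * g' t).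
Proof.
move=> df dg x; have [df1 df2] := df x; have [dg1 dg2] := dg x; split.
- have -> : (fun t => complex.Re (f t * g t)) =
      (fun t => complex.Re (f t)) * (fun t => complex.Re (g t)) -
      (fun t => complex.Im (f t)) * (fun t => complex.Im (g t)).
    by apply/funext => t; rewrite ReM.
  by apply: is_derive_eq; rewrite ReD !ReM /GRing.scale /=; ring.
- have -> : (fun t => complex.Im (f t * g t)) =
      (fun t => complex.Re (f t)) * (fun t => complex.Im (g t)) +
      (fun t => complex.Im (f t)) * (fun t => complex.Re (g t)).
    by apply/funext => t; rewrite ImM.
  by apply: is_derive_eq; rewrite ImD !ImM /GRing.scale /=; ring.
Qed.

Lemma is_cderiveV f f' : (forall t, f t != 0) -> is_cderive f f' ->
  is_cderive (fun t => (f t)^-1) (fun t => - f' t / f t ^+ 2).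
Proof.
move=> f0 df x; have [df1 df2] := df x.
pose N t := complex.Re (f t) ^+ 2 + complex.Im (f t) ^+ 2.
have dN : is_derive x 1 N
    (complex.Re (f x) *: complex.Re (f' x) + complex.Re (f x) *: complex.Re (f' x) +
    (complex.Im (f x) *: complex.Im (f' x) + complex.Im (f x) *: complex.Im (f' x))).
  have -> : N = (fun t => complex.Re (f t)) * (fun t => complex.Re (f t)) +
                (fun t => complex.Im (f t)) * (fun t => complex.Im (f t)).
    by apply/funext => t; rewrite /N /= !expr2.
  exact: is_deriveD (is_deriveM df1 df1) (is_deriveM df2 df2).
have dNV := @is_derive_inv _ N x _ (normc2_neq0 (f0 x)) dN.
have sq (a b : R) :
  (a * a - b * b) ^+ 2 + (a * b + b * a) ^+ 2 = (a ^+ 2 + b ^+ 2) ^+ 2 by ring.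
split.
- have -> : (fun t => complex.Re (f t)^-1) =
      (fun t => complex.Re (f t)) * (fun t => (N t)^-1).
    by apply/funext => t; rewrite ReV.
  apply: is_derive_eq (is_deriveM df1 dNV) _; rewrite /N /GRing.scale /=.
  move: (f0 x); case: (f x) (f' x) => a b [c d] /= /normc2_neq0 /= n0.
  by rewrite sq; field.
- have -> : (fun t => complex.Im (f t)^-1) =
      - (fun t => complex.Im (f t)) * (fun t => (N t)^-1).
    by apply/funext => t; rewrite ImV.
  apply: is_derive_eq (is_deriveM (is_deriveN df2) dNV) _.
  rewrite /N /GRing.scale opprfctE /=.
  move: (f0 x); case: (f x) (f' x) => a b [c d] /= /normc2_neq0 /= n0.
  by rewrite sq; field.
Qed.

Lemma is_cderiveX f f' k : is_cderive f f' ->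
  is_cderive (fun t => f t ^+ k) (fun t => k%:R * f t ^+ k.-1 * f' t).
Proof.
move=> df; elim: k => [|k IHk].
  by apply: is_cderive_ext (is_cderive_cst 1) _ _ => t; rewrite ?expr0 ?mul0r.
apply: is_cderive_ext (is_cderiveM df IHk) _ _ => t; first by rewrite exprS.
by case: k {IHk} => [|k] /=; rewrite ?expr0 ?exprS; ring.
Qed.

Lemma is_cderive_sum (I : Type) (r : seq I) (P : pred I) (F F' : I -> R -> R[i]) :
  (forall i, is_cderive (F i) (F' i)) ->
  is_cderive (fun t => \sum_(i <- r | P i) F i t) (fun t => \sum_(i <- r | P i) F' i t).
Proof.
move=> dF; elim: r => [|i r IHr].
  by apply: is_cderive_ext (is_cderive_cst 0) _ _ => t; rewrite big_nil.
case Pi: (P i); last by apply: is_cderive_ext IHr _ _ => t; rewrite big_cons Pi.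
by apply: is_cderive_ext (is_cderiveD (dF i) IHr) _ _ => t; rewrite big_cons Pi.
Qed.

Lemma is_cderive_affine c c' :
  is_cderive (fun t => c + c' * t%:C) (fun=> c').
Proof.
apply: is_cderive_ext (is_cderiveD (is_cderive_cst c)
  (is_cderiveM (is_cderive_cst c') is_cderive_real)) _ _ => t //.
by rewrite add0r mul0r add0r mulr1.
Qed.

Lemma is_cderive_onemX k :
  is_cderive (fun t : R => ((1 - t) ^+ k)%:C) (fun t => - k%:R * ((1 - t) ^+ k.-1)%:C).
Proof.
apply: is_cderive_ext (is_cderiveX k (is_cderive_affine 1 (-1))) _ _ => t.
  by rewrite rmorphXn rmorphB rmorph1 mulN1r.
by rewrite rmorphXn rmorphB rmorph1 mulN1r mulrN1 mulNr.
Qed.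

Lemma is_cderive_recip_affine (c w w0 : R[i]) :
  (forall t : R, w - w0 * t%:C != 0) ->
  is_cderive (fun t => c / (w - w0 * t%:C)) (fun t => c * w0 / (w - w0 * t%:C) ^+ 2).
Proof.
move=> z0; have dz : is_cderive (fun t => w - w0 * t%:C) (fun=> - w0).
  by apply: is_cderive_ext (is_cderive_affine w (- w0)) _ _ => t //; rewrite mulNr.
apply: is_cderive_ext (is_cderiveM (is_cderive_cst c) (is_cderiveV z0 dz)) _ _ => t //.
by rewrite mul0r add0r opprK mulrA.
Qed.

Lemma cderivableD f g : cderivable f -> cderivable g ->
  cderivable (fun t => f t + g t).
Proof. by move=> [f' df] [g' dg]; eexists; exact: is_cderiveD. Qed.

Lemma cderivableMl c f : cderivable f -> cderivable (fun t => c * f t).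
Proof. by move=> [f' df]; eexists; exact: is_cderiveM (is_cderive_cst c) df. Qed.

Lemma cderivable_sum (I : Type) (r : seq I) (P : pred I) (F : I -> R -> R[i]) :
  (forall i, cderivable (F i)) -> cderivable (fun t => \sum_(i <- r | P i) F i t).
Proof. by move=> /choice[F' dF]; eexists; exact: is_cderive_sum. Qed.

Lemma cderivable_continuous f : cderivable f ->
  continuous (fun t => complex.Re (f t)) /\ continuous (fun t => complex.Im (f t)).
Proof.
move=> [f' df]; split => x; have [dfx1 dfx2] := df x;
  apply/differentiable_continuous/derivable1_diffP; exact: ex_derive.
Qed.

End ComplexValuedCalculus.

Section UnitIntervalIntegral.
Variable R : realType.
Implicit Types (f g : R -> R[i]) (c : R[i]).

Lemma Rintegral01_FTC (F f : R -> R) :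
  (forall x : R, is_derive x 1 F (f x)) -> continuous f ->
  Rintegral lebesgue_measure `[0, 1] f = F 1 - F 0.
Proof.
move=> dF cf; have cF x : {for x, continuous F}.
  by apply/differentiable_continuous/derivable1_diffP; exact: ex_derive.
rewrite /Rintegral (@continuous_FTC2 R f F 0 1 ltr01) //.
- exact: continuous_subspaceT.
- split; first by move=> x _; exact: ex_derive.
  + exact/cvg_at_right_filter/cF.
  + exact/cvg_at_left_filter/cF.
- by move=> x _; rewrite derive1E derive_val.
Qed.

Lemma cint01_FTC F f : is_cderive F f -> cderivable f -> cint01 f = F 1 - F 0.
Proof.
move=> dF /cderivable_continuous[c1 c2]; rewrite /cint01.
rewrite (Rintegral01_FTC (fun x => (dF x).1) c1).
rewrite (Rintegral01_FTC (fun x => (dF x).2) c2).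
by case: (F 1) (F 0) => [? ?] [? ?].
Qed.

Lemma cderivable_integrable f : cderivable f ->
  lebesgue_measure.-integrable `[0, 1] (EFin \o (fun t => complex.Re (f t))) /\
  lebesgue_measure.-integrable `[0, 1] (EFin \o (fun t => complex.Im (f t))).
Proof.
move=> /cderivable_continuous[c1 c2].
by split; apply: continuous_compact_integrable;
  [exact: segment_compact | exact: continuous_subspaceT | exact: segment_compact
  | exact: continuous_subspaceT].
Qed.

Lemma cint01D f g : cderivable f -> cderivable g ->
  cint01 (fun t => f t + g t) = cint01 f + cint01 g.
Proof.
move=> /cderivable_integrable[f1 f2] /cderivable_integrable[g1 g2].
rewrite /cint01.
under eq_Rintegral do rewrite ReD.
under [X in _ +i* X]eq_Rintegral do rewrite ImD.
by rewrite !RintegralD.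
Qed.

Lemma cint01Ml c f : cderivable f -> cint01 (fun t => c * f t) = c * cint01 f.
Proof.
move=> /cderivable_integrable[f1 f2]; rewrite /cint01.
under eq_Rintegral do rewrite ReM.
under [X in _ +i* X]eq_Rintegral do rewrite ImM.
have iZ (k : R) (h : R -> R) : lebesgue_measure.-integrable `[0, 1] (EFin \o h) ->
    lebesgue_measure.-integrable `[0, 1] (EFin \o (fun x => k * h x)).
  move=> ih; rewrite (_ : _ \o _ = (fun x => (k%:E * (EFin \o h) x)%E)).
    exact: integrableZl.
  by apply/funext => x /=; rewrite EFinM.
rewrite RintegralB ?RintegralD ?iZ // !RintegralZl //.
by case: c.
Qed.

Lemma cint01_sum (I : Type) (r : seq I) (P : pred I) (F : I -> R -> R[i]) :
  (forall i, cderivable (F i)) ->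
  cint01 (fun t => \sum_(i <- r | P i) F i t) = \sum_(i <- r | P i) cint01 (F i).
Proof.
move=> dF; elim: r => [|i r IHr].
  rewrite big_nil /cint01.
  under eq_Rintegral do rewrite big_nil.
  under [X in _ +i* X]eq_Rintegral do rewrite big_nil.
  by rewrite Rintegral_cst //= mul0r.
rewrite big_cons; case Pi: (P i); rewrite -IHr; last first.
  by congr cint01; apply/funext => t; rewrite big_cons Pi.
rewrite -cint01D //; last exact: cderivable_sum.
by congr cint01; apply/funext => t; rewrite big_cons Pi.
Qed.

Lemma Rintegral01_eq_except (F G : R -> R) (s : R) : continuous G ->
  (forall t, t != s -> F t = G t) ->
  Rintegral lebesgue_measure `[0, 1] F = Rintegral lebesgue_measure `[0, 1] G.
Proof.
move=> cG FG; rewrite /Rintegral; congr fine.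
have mD : measurable (`[0, 1] `\ s : set R) by apply: measurableD.
have mG : measurable_fun (`[0, 1] `\ s : set R) (fun t : R => (G t)%:E).
  by apply/measurable_EFinP/measurable_funTS; exact: continuous_measurable_fun.
have mF : measurable_fun (`[0, 1] `\ s : set R) (fun t : R => (F t)%:E).
  by apply: eq_measurable_fun mG => t; rewrite inE => -[_ /eqP ts] /=; rewrite FG.
rewrite -(integral_setD1 mD mF) -(integral_setD1 mD mG).
by apply: eq_integral => t; rewrite inE => -[_ /eqP ts] /=; rewrite FG.
Qed.

Lemma cint01_eq_except f g (s : R) : cderivable g ->
  (forall t, t != s -> f t = g t) -> cint01 f = cint01 g.
Proof.
move=> /cderivable_continuous[c1 c2] fg; rewrite /cint01.
by rewrite (Rintegral01_eq_except c1 (fun t ts => congr1 _ (fg t ts)))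
           (Rintegral01_eq_except c2 (fun t ts => congr1 _ (fg t ts))).
Qed.

Lemma cint01_onemX k : cint01 (fun t : R => ((1 - t) ^+ k)%:C) = k.+1%:R^-1.
Proof.
have dF : is_cderive (fun t : R => - k.+1%:R^-1 * ((1 - t) ^+ k.+1)%:C)
                     (fun t => ((1 - t) ^+ k)%:C).
  apply: is_cderive_ext
    (is_cderiveM (is_cderive_cst _) (is_cderive_onemX k.+1)) _ _ => t //=.
  by rewrite mul0r add0r mulrA mulrNN mulVf ?mul1r // pnatr_eq0.
rewrite (cint01_FTC dF); last by eexists; exact: is_cderive_onemX.
by rewrite subrr subr0 expr0n expr1n /= rmorph0 rmorph1 mulr0 mulr1 sub0r opprK.
Qed.

Lemma cint01_recip_affine (c w w0 : R[i]) k : c != 0 ->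
  (forall t : R, w - w0 * t%:C != 0) ->
  let q t := c / (w - w0 * t%:C) in
  k.+1%:R * cint01 (fun t => q t ^+ k.+2 * ((1 - t) ^+ k)%:C) = q 1 * q 0 ^+ k.+1.
Proof.
move=> c0 z0 q.
have dq := is_cderive_recip_affine c z0.
have q10 : q 1 != 0 by rewrite mulf_neq0 ?invr_eq0.
pose m t := q t * (1 - t%:C).
have dm : is_cderive m (fun t => - q t ^+ 2 / q 1).
  have d1 : is_cderive (fun t : R => 1 - t%:C) (fun=> -1).
    by apply: is_cderive_ext (is_cderive_affine 1 (-1)) _ _ => t //; rewrite mulN1r.
  apply: is_cderive_ext (is_cderiveM dq d1) _ _ => t //.
  rewrite /q rmorph1 mulr1; move: (z0 t) (z0 1); rewrite rmorph1 mulr1.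
  by move: (t%:C) => T zt z1; field; rewrite zt z1 c0.
pose F t := - q 1 / k.+1%:R * m t ^+ k.+1.
have dF : is_cderive F (fun t => q t ^+ k.+2 * ((1 - t) ^+ k)%:C).
  apply: is_cderive_ext
    (is_cderiveM (is_cderive_cst _) (is_cderiveX k.+1 dm)) _ _ => t //.
  rewrite mul0r add0r /m rmorphXn rmorphB rmorph1 exprMn /= !exprS.
  by field; rewrite q10 addrC natr1 pnatr_eq0.
rewrite (cint01_FTC dF); last first.
  by eexists; apply: is_cderiveM (is_cderiveX _ dq) (is_cderive_onemX k).
rewrite /F /m !rmorph1 !rmorph0 subrr mulr0 expr0n mulr0 subr0 mulr1 sub0r.
by field; rewrite addrC natr1 pnatr_eq0.
Qed.

End UnitIntervalIntegral.

Section Phase.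
Variable R : rcfType.
Implicit Types z v w : R[i].

(** [cross z v = 2 'i Im (z^* v)] vanishes iff [z] and [v] are real-collinear. *)
Definition cross z v := z^* * v - v^* * z.

Lemma phaseM z v : phase (z * v) = phase z * phase v.
Proof. by rewrite /phase rmorphM invfM mulrACA. Qed.

Lemma phaseX z k : phase (z ^+ k) = phase z ^+ k.
Proof. by rewrite /phase rmorphXn exprMn exprVn. Qed.

Lemma phase_sub z v : z != 0 -> v != 0 -> phase z - phase v = cross z v / (z * v).
Proof. by move=> z0 v0; rewrite /phase /cross; field; rewrite z0 v0. Qed.

Lemma cross_subMr w (w0 : R[i]) (t : R) : cross (w - w0 * t%:C) w0 = cross w w0.
Proof.
rewrite /cross; case: w w0 => a b [c d] /=; apply/eqP; rewrite eq_complex /=.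
by apply/andP; split; apply/eqP; ring.
Qed.

End Phase.

Section PhaseMoments.
Variable R : realType.
Variables w w0 : R[i].
Hypothesis w0_neq0 : w0 != 0.

Definition phase_moment j k :=
  cint01 (fun t : R => phase (w - w0 * t%:C) ^+ j * ((1 - t) ^+ k)%:C).

Lemma phase_sub_mul_real (t : R) : w - w0 * t%:C != 0 ->
  phase (w - w0 * t%:C) - phase w0 = cross w w0 / w0 / (w - w0 * t%:C).
Proof.
move=> z0; rewrite phase_sub // cross_subMr.
by field; rewrite z0 w0_neq0.
Qed.

Lemma sub_mul_real_eq0 (t : R) : w - w0 * t%:C = 0 -> t = complex.Re (w / w0).
Proof. by move=> /eqP; rewrite subr_eq0 => /eqP->; rewrite [w0 * _]mulrC mulfK. Qed.

Lemma phase_moment0 k : phase_moment 0 k = k.+1%:R^-1.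
Proof.
by rewrite /phase_moment; under eq_fun do rewrite expr0 mul1r; exact: cint01_onemX.
Qed.

Section Collinear.
Hypothesis cross0 : cross w w0 = 0.

Lemma phase_sub_mul_real_collinear (t : R) : w - w0 * t%:C != 0 ->
  phase (w - w0 * t%:C) = phase w0.
Proof.
by move=> z0; apply/eqP; rewrite -subr_eq0 phase_sub_mul_real // cross0 !mul0r.
Qed.

Lemma phase_moment_collinear j k : phase_moment j k = phase w0 ^+ j / k.+1%:R.
Proof.
rewrite /phase_moment (@cint01_eq_except _ _
  (fun t => phase w0 ^+ j * ((1 - t) ^+ k)%:C) (complex.Re (w / w0))).
- by rewrite cint01Ml ?cint01_onemX //; eexists; exact: is_cderive_onemX.
- by apply: cderivableMl; eexists; exact: is_cderive_onemX.
move=> t ts; rewrite phase_sub_mul_real_collinear //.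
by apply: contra ts => /eqP/sub_mul_real_eq0->.
Qed.

End Collinear.

Section Generic.
Hypothesis cross_neq0 : cross w w0 != 0.

Lemma sub_mul_real_neq0 (t : R) : w - w0 * t%:C != 0.
Proof.
apply: contra cross_neq0 => /eqP z0.
by rewrite -(cross_subMr w w0 t) z0 /cross rmorph0 !(mul0r, mulr0) subrr.
Qed.

Lemma is_cderive_phase_sub_mul_real :
  is_cderive (fun t : R => phase (w - w0 * t%:C))
    (fun t => cross w w0 / w0 * w0 / (w - w0 * t%:C) ^+ 2).
Proof.
apply: is_cderive_ext (is_cderiveD (is_cderive_cst (phase w0))
  (is_cderive_recip_affine (cross w w0 / w0) sub_mul_real_neq0)) _ _ => t /=.
  by rewrite -phase_sub_mul_real ?sub_mul_real_neq0 // addrC subrK.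
by rewrite add0r.
Qed.

Lemma phase_moments_generic k :
  \sum_(j < k.+3) 'C(k.+2, j)%:R * (- phase w0) ^+ (k.+2 - j) * phase_moment j k =
  (phase (w - w0) - phase w0) * (phase w - phase w0) ^+ k.+1 / k.+1%:R.
Proof.
have dmom j : cderivable (fun t : R => phase (w - w0 * t%:C) ^+ j * ((1 - t) ^+ k)%:C).
  eexists; exact: is_cderiveM (is_cderiveX j is_cderive_phase_sub_mul_real)
    (is_cderive_onemX k).
under eq_bigr do rewrite /phase_moment -cint01Ml ?dmom //.
rewrite -cint01_sum; last by move=> j; apply: cderivableMl.
set c := cross w w0 / w0.
have -> : (fun t : R => \sum_(j < k.+3) 'C(k.+2, j)%:R * (- phase w0) ^+ (k.+2 - j) *
      (phase (w - w0 * t%:C) ^+ j * ((1 - t) ^+ k)%:C)) =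
    (fun t => (c / (w - w0 * t%:C)) ^+ k.+2 * ((1 - t) ^+ k)%:C).
  apply/funext => t; rewrite -phase_sub_mul_real ?sub_mul_real_neq0 //.
  rewrite [_ - phase w0]addrC [(_ + _) ^+ k.+2]exprDn mulr_suml; apply: eq_bigr => j _.
  by rewrite -mulr_natl; ring.
have c0 : c != 0 by rewrite mulf_neq0 ?invr_eq0.
have := cint01_recip_affine k c0 sub_mul_real_neq0 => /= moment.
have q1 := phase_sub_mul_real (sub_mul_real_neq0 1).
have q0 := phase_sub_mul_real (sub_mul_real_neq0 0).
rewrite rmorph1 mulr1 in q1; rewrite rmorph0 mulr0 subr0 in q0.
rewrite rmorph1 rmorph0 mulr1 mulr0 subr0 in moment.
by rewrite q1 q0 -moment [_ * cint01 _]mulrC mulfK // pnatr_eq0.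
Qed.

End Generic.

Lemma phase_moments k : w != w0 ->
  \sum_(j < k.+3) 'C(k.+2, j)%:R * (- phase w0) ^+ (k.+2 - j) * phase_moment j k =
  (phase (w - w0) - phase w0) * (phase w - phase w0) ^+ k.+1 / k.+1%:R.
Proof.
move=> ww0; have [cross0|cross_neq0] := eqVneq (cross w w0) 0; last first.
  exact: phase_moments_generic.
have := @phase_sub_mul_real_collinear cross0 1; rewrite rmorph1 mulr1 subr_eq0.
move=> /(_ ww0)->; rewrite subrr !mul0r.
under eq_bigr do rewrite phase_moment_collinear //.
transitivity ((- phase w0 + phase w0) ^+ k.+2 / k.+1%:R).
  by rewrite exprDn mulr_suml; apply: eq_bigr => j _; rewrite -mulr_natl; ring.
by rewrite addNr expr0n mul0r.
Qed.

End PhaseMoments.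

Lemma exprDn_tail (R : comPzRingType) (x y : R) n :
  \sum_(1 <= k < n.+1) 'C(n, k)%:R * x ^+ (n - k) * y ^+ k = (x + y) ^+ n - x ^+ n.
Proof.
rewrite exprDn big_ord_recl /= subn0 expr0 mulr1 bin0 mulr1n addrC addKr.
rewrite big_add1 /= big_mkord; apply: eq_bigr => i _.
by rewrite /bump /= add1n mulr_natl mulrnAl.
Qed.

Definition moment_coef (R : pzRingType) (n k j : nat) : R :=
  (k * 'C(n, k) * 'C(k.+1, j))%:R * (-1) ^+ (k.+1 - j).

Lemma sum_moment_coef (R : rcfType) n k (b : R[i]) (P : nat -> R[i]) : (k <= n)%N ->
  \sum_(1 <= j < n.+2) (moment_coef R n k j)%:C * b ^+ (n.+1 - j) * P j =
  (k * 'C(n, k))%:R * b ^+ (n - k) *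
  \sum_(j < k.+1) 'C(k.+1, j.+1)%:R * (- b) ^+ (k - j) * P j.+1.
Proof.
move=> kn; rewrite (big_cat_nat (n := k.+2)) //= ?ltnS //.
rewrite [X in _ + X]big_nat_cond [X in _ + X]big1 ?addr0; last first.
  move=> j /andP[/andP[kj _] _].
  by rewrite /moment_coef (@bin_small k.+1 j) // muln0 mul0r rmorph0 !mul0r.
rewrite big_add1 /= big_mkord mulr_sumr; apply: eq_bigr => j _.
have jk := ltn_ord j; have -> : (n.+1 - j.+1 = (n - k) + (k - j))%N by lia.
rewrite /moment_coef rmorphM rmorphXn rmorphN1 rmorph_nat exprD (exprNn b) !natrM.
by rewrite subSS; ring.
Qed.

Theorem lemma3p8 (R : realType) (n : nat) (hn : (1 <= n)%N) :
  exists c : nat -> nat -> R,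
  forall w w0 : R[i], w0 != 0 -> w != 0 -> w != w0 ->
    phase (w ^+ n * (w - w0)) =
      phase (w0 * w ^+ n) + phase (w0 ^+ n * (w - w0)) +
      \sum_(1 <= k < n.+1) \sum_(1 <= j < n.+2)
         (c k j)%:C * phase w0 ^+ (n.+1 - j) *
         cint01 (fun t : R => phase (w - w0 * t%:C) ^+ j * ((1 - t) ^+ (k - 1))%:C).
Proof.
exists (moment_coef R n) => w w0 w0_neq0 _ ww0.
rewrite !phaseM !phaseX.
set a := phase w; set b := phase w0; set u := phase (w - w0).
have inner k : (1 <= k < n.+1)%N ->
    \sum_(1 <= j < n.+2) (moment_coef R n k j)%:C * b ^+ (n.+1 - j) *
       phase_moment w w0 j (k - 1) =
    'C(n, k)%:R * b ^+ (n - k) * ((u - b) * (a - b) ^+ k - (- b) ^+ k.+1).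
  case: k => // k /andP[_ kn]; rewrite subn1 /= sum_moment_coef //.
  have := phase_moments w0_neq0 k ww0; rewrite big_ord_recl phase_moment0 bin0 subn0.
  move=> /(canRL (addKr _)) moments.
  rewrite [X in _ * X = _]moments -/a -/b -/u natrM.
  by field; rewrite addrC natr1 pnatr_eq0.
rewrite (eq_big_nat _ _ inner).
have -> : \sum_(1 <= k < n.+1)
    'C(n, k)%:R * b ^+ (n - k) * ((u - b) * (a - b) ^+ k - (- b) ^+ k.+1) =
    (u - b) * \sum_(1 <= k < n.+1) 'C(n, k)%:R * b ^+ (n - k) * (a - b) ^+ k +
    b * \sum_(1 <= k < n.+1) 'C(n, k)%:R * b ^+ (n - k) * (- b) ^+ k.
  rewrite !mulr_sumr -big_split /=; apply: eq_bigr => k _.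
  by rewrite exprS; ring.
rewrite !exprDn_tail subrKC subrr expr0n eqn0Ngt hn /=.
ring.
Qed.
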